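(* For all integers $k,f,n$ with $1\le k\le f-1$ and $f\le n-1$, $\mathrm{Cons}(n,f)$ is not ${}^cC$-reducible to $k\text{-TAg}(n,f)$ (in particular, it is not $C$-reducible to $k\text{-TAg}(n,f)$).
   Context: Model: a finite set of processes runs an asynchronous algorithm communicating by reliable message passing with unbounded delays and speeds; processes fail only by crashing. Time is $\mathcal T=\mathbb N$; a failure pattern $F$ for $\Pi$ is a nondecreasing map $\mathcal T\to2^\Pi$, $Faulty(F)=\bigcup_tF(t)$. A binary agreement problem $P$ for $\Pi$ maps each $(F,\vec V)$, $\vec V\in\{0,1\}^\Pi$, to a nonempty $P(F,\vec V)\subseteq\{0,1\}$; a task is $T=(P,f)$. An algorithm solves $T$ if in every run with $|Faulty(F)|\le f$ and initial values $\vec V$: every correct process eventually decides, decisions are irrevocable, no two processes decide differently, and decisions lie in $P(F,\vec V)$. $k\text{-TAg}_\Pi(F,\vec V)=\{0\}$ if at least $k$ entries of $\vec V$ are $0$; $=\{1\}$ if $\vec V$ is all-ones and $|Faulty(F)|\le k-1$; $=\{0,1\}$ otherwise; $k\text{-TAg}(\Pi,f)=(k\text{-TAg}_\Pi,f)$; $k\text{-TAg}(n,f)$ and $\mathrm{Cons}(n,f)=n\text{-TAg}(n,f)$ are the versions for $\Pi=\{1,\dots,n\}$. Oracles: for $T=(P,f)$ on $\Pi$, an $f$-resilient oracle suitable for $P$ is a black box with consultants $\Pi$ whose history is a sequence of successive consultations, in each of which every consultant may submit at most one query in $\{0,1\}$ and the oracle returns a common response $d$ with $d\in P(F,\vec V)$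 for every $\vec V$ extending the partial query vector (the oracle may use the whole failure pattern, including future crashes), and every correct querier gets the response whenever at least $|\Pi|-f$ consultants query; $\mathcal O.T$ is the most general such oracle. It is consistent if, in every history, for any two consultations with query vectors $\vec W_1\supseteq\vec W_2$, answering $d$ on $\vec W_2$ implies answering $d$ on $\vec W_1$; ${}^c\mathcal O.T$ is the most general consistent one. $T_1\le_C T_2$ (resp. $T_1\le_{{}^cC}T_2$) means there is an algorithm solving $T_1$ whose processes may additionally consult the oracle $\mathcal O.T_2$ (resp. ${}^c\mathcal O.T_2$); $C$-reducibility implies ${}^cC$-reducibility. *)

From mathcomp Require Import all_boot.
From mathcomp Require Import boolp.

Set Implicit Arguments.
Unset Strict Implicit.
Unset Printing Implicit Defensive.

Definition fpattern (n : nat) := nat -> {set 'I_n}.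

Definition fp_nondecreasing (n : nat) (F : fpattern n) : Prop :=
  forall t t' : nat, t <= t' -> F t \subset F t'.

Definition Faulty (n : nat) (F : fpattern n) : {set 'I_n} :=
  [set p | `[< exists t, p \in F t >]].

Definition ivec (n : nat) := 'I_n -> bool.   (* 0 = false, 1 = true *)

(* P(F,V) as a (boolean) subset of {0,1}; nonemptiness is not needed below *)
Definition agreement_problem (n : nat) := fpattern n -> ivec n -> pred bool.

Record task (n : nat) := Task { tprob : agreement_problem n; tres : nat }.

Definition kTAg_prob (n k : nat) : agreement_problem n := fun F V d =>
  if k <= #|[set p | ~~ V p]| then d == false
  else if [forall p, V p] && (#|Faulty F| <= k - 1) then d == true
  else true.

Definition kTAg (n k f : nat) : task n := @Task n (@kTAg_prob n k) f.
Definition ConsT (n f : nat) : task n := @kTAg n n f.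

(* The event a process receives in a step: nothing, a message from a
   sender, or the oracle's response d to consultation c. *)
Inductive event (n : nat) (M : Type) :=
| EvNone
| EvMsg of 'I_n & M
| EvResp of nat & bool.
Arguments EvNone {n M}.
Arguments EvMsg {n M}.
Arguments EvResp {n M}.

(* A step: from the local state and the received event, compute the new
   state, the messages sent (destination, content) and possibly a query
   (consultation index c, query value b).  [decision s] is the decision
   recorded in local state s (None = undecided). *)
Record algorithm (n : nat) := Algorithm {
  St : Type;
  Msg : Type;
  init : 'I_n -> bool -> St;
  step : 'I_n -> St -> event n Msg ->
         St * seq ('I_n * Msg) * option (nat * bool);
  decision : St -> option bool }.
Arguments step {n} a _ _ _.
Arguments decision {n} a _.
Arguments init {n} a _ _.

(* A run is determined by the adversary's choices: the schedule, the events
   delivered, the origin (send time, index in the sent list) of each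
   delivered message, and the oracle's (common) response per consultation. *)
Record run (n : nat) (A : algorithm n) := Run {
  sched : nat -> option 'I_n;
  evt : nat -> event n (Msg A);
  src : nat -> nat * nat;
  resp : nat -> option bool }.

Definition lookup (T : Type) (s : seq T) (i : nat) : option T :=
  nth None (map Some s) i.

Section Runs.
Variables (n : nat) (A : algorithm n) (V : ivec n) (R : run A).

(* conf t p = local state of p at time t (before the step of time t) *)
Fixpoint conf (t : nat) : 'I_n -> St A :=
  match t with
  | 0 => fun p => init A p (V p)
  | t'.+1 => fun p =>
      if sched R t' == Some p
      then (step A p (conf t' p) (evt R t')).1.1
      else conf t' p
  end.

Definition sent (t : nat) : seq ('I_n * Msg A) :=
  if sched R t is Some p then (step A p (conf t p) (evt R t)).1.2 else [::].

Definition qry (t : nat) : option (nat * bool) :=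
  if sched R t is Some p then (step A p (conf t p) (evt R t)).2 else None.

(* query vector of consultation c: p's query in c is b
   (only the first query of p in consultation c counts) *)
Definition Wq (c : nat) (p : 'I_n) (b : bool) : Prop :=
  exists t, [/\ sched R t = Some p, qry t = Some (c, b) &
    forall t' b', t' < t -> sched R t' = Some p -> qry t' <> Some (c, b')].

Definition queried_before (p : 'I_n) (c t : nat) : Prop :=
  exists t' b, [/\ t' < t, sched R t' = Some p & qry t' = Some (c, b)].

Definition admissible (T2 : task n) (consistent : bool) (F : fpattern n)
  : Prop :=
  (forall t p, sched R t = Some p -> p \notin F t) /\
  (forall p, p \notin Faulty F -> forall t, exists t', t <= t' /\ sched R t' = Some p) /\
  (forall t p q m, sched R t = Some p -> evt R t = EvMsg q m ->
     (src R t).1 < t /\ sched R (src R t).1 = Some q /\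
     lookup (sent (src R t).1) (src R t).2 = Some (p, m)) /\
  (forall t1 t2 p1 p2 q1 q2 m1 m2, t1 <> t2 ->
     sched R t1 = Some p1 -> evt R t1 = EvMsg q1 m1 ->
     sched R t2 = Some p2 -> evt R t2 = EvMsg q2 m2 -> src R t1 <> src R t2) /\
  (forall t' i q p m, sched R t' = Some q -> lookup (sent t') i = Some (p, m) ->
     p \notin Faulty F ->
     exists t, [/\ sched R t = Some p, evt R t = EvMsg q m & src R t = (t', i)]) /\
  (forall t p c d, sched R t = Some p -> evt R t = EvResp c d ->
     [/\ resp R c = Some d, queried_before p c t &
       forall t' d', t' < t -> sched R t' = Some p -> evt R t' <> EvResp c d']) /\
  (forall c d, resp R c = Some d ->
     forall V' : ivec n, (forall p b, Wq c p b -> V' p = b) -> tprob T2 F V' d) /\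
  (forall c (S : {set 'I_n}), n - tres T2 <= #|S| ->
     (forall p, p \in S -> exists b, Wq c p b) ->
     exists d, resp R c = Some d /\
       forall p, p \notin Faulty F -> (exists b, Wq c p b) ->
         exists t, sched R t = Some p /\ evt R t = EvResp c d) /\
  (consistent ->
     forall c1 c2 d, (forall p b, Wq c2 p b -> Wq c1 p b) ->
       resp R c2 = Some d -> resp R c1 = Some d).

End Runs.

Definition solves (n : nat) (A : algorithm n) (T1 T2 : task n)
  (consistent : bool) : Prop :=
  forall (F : fpattern n), fp_nondecreasing F -> #|Faulty F| <= tres T1 ->
  forall (V : ivec n) (R : run A), admissible V R T2 consistent F ->
    (forall p, p \notin Faulty F -> exists t d, decision A (conf V R t p) = Some d) /\
    (forall p t t' d, t <= t' -> decision A (conf V R t p) = Some d ->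
       decision A (conf V R t' p) = Some d) /\
    (forall p q t t' d1 d2, decision A (conf V R t p) = Some d1 ->
       decision A (conf V R t' q) = Some d2 -> d1 = d2) /\
    (forall p t d, decision A (conf V R t p) = Some d -> tprob T1 F V d).

Definition C_reducible (n : nat) (T1 T2 : task n) : Prop :=
  exists A : algorithm n, solves A T1 T2 false.
Definition cC_reducible (n : nat) (T1 T2 : task n) : Prop :=
  exists A : algorithm n, solves A T1 T2 true.
Arguments ConsT : clear implicits.
Arguments kTAg : clear implicits.
Arguments C_reducible {n} T1 T2.
Arguments cC_reducible {n} T1 T2.

(* Let K be a set of k processes.  In a run in which the processes of K are
   dead from the start, at least k processes are faulty, so answering 0 to
   every consultation is a legal, and trivially consistent, behaviour of a
   k-TAg oracle.  Against this oracle an algorithm for Cons(n, f) is an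
   ordinary asynchronous consensus algorithm for the other processes that
   still tolerates one more crash (k < f), and the argument of Fischer, Lynch
   and Paterson applies: some initial configuration is bivalent, every pending
   step can be postponed until it leads to a bivalent configuration, and a
   fair schedule made of such postponements returns to bivalent
   configurations forever, contradicting agreement once a correct process
   has decided. *)

From mathcomp Require Import all_boot boolp zify.

Set Implicit Arguments.
Unset Strict Implicit.
Unset Printing Implicit Defensive.

Lemma lookup_nth_size (T : Type) (s : seq (seq T)) j i v :
  lookup (nth [::] s j) i = Some v -> j < size s.
Proof. by case: (ltnP j (size s)) => // h; rewrite nth_default //; case: i. Qed.

Lemma discrete_ivt (P : nat -> Prop) m :
  P 0 -> ~ P m -> exists i, [/\ i < m, P i & ~ P i.+1].
Proof.
elim: m => [|m IH] // P0 Pm; case: (pselect (P m)) => [Pm'|nPm]; first by exists m.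
by have [i [lt_im Pi nPi]] := IH P0 nPm; exists i; split=> //; apply: ltnW.
Qed.

Lemma kTAg_prob_false n k (F : fpattern n) V :
  k <= #|Faulty F| -> kTAg_prob k F V false.
Proof.
rewrite /kTAg_prob => le_kF; case: ifP => [//|/negbT]; rewrite -ltnNge => lt_k.
by case: ifP => // /andP [_ le]; lia.
Qed.

Lemma kTAg_prob_const n k (F : fpattern n) b d : 0 < k <= n -> #|Faulty F| < k ->
  kTAg_prob k F (fun _ => b) d -> d = b.
Proof.
rewrite /kTAg_prob => /andP [k_gt0 le_kn] lt_Fk; case: b.
- have -> : [set p : 'I_n | ~~ true] = set0 by apply/setP => p; rewrite !inE.
  have -> : [forall p : 'I_n, true] by apply/forallP.
  have le_Fk : #|Faulty F| <= k - 1 by lia.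
  by rewrite cards0 leqNgt k_gt0 /= le_Fk => /eqP.
- have -> : [set p : 'I_n | ~~ false] = setT by apply/setP => p; rewrite !inE.
  by rewrite cardsT card_ord le_kn => /eqP.
Qed.

Lemma exists_notin_set n (S : {set 'I_n}) : #|S| < n -> exists p, p \notin S.
Proof.
move=> lt_S; suff /subsetPn [p _ pS] : ~~ ([set: 'I_n] \subset S) by exists p.
by apply: contraL lt_S => /subset_leq_card; rewrite cardsT card_ord leqNgt.
Qed.

Section Model.
Variables (n : nat) (A : algorithm n).

(* Message [(q, j, i)] is the [i]-th message sent by [q] in its [j]-th step.
   A process either receives nothing, a message, or the response to one of
   its consultations; responses are always [0] ([false]). *)
Definition msg_id := ('I_n * nat * nat)%type.
Definition delivery := (msg_id + nat)%type.
Definition action := ('I_n * option delivery)%type.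

Record config := Config {
  lst : 'I_n -> St A;
  outbox : 'I_n -> seq (seq ('I_n * Msg A));
  delivered : msg_id -> bool;
  queried : 'I_n -> nat -> bool;
  answered : 'I_n -> nat -> bool }.

Definition msg_at (C : config) (x : msg_id) : option ('I_n * Msg A) :=
  lookup (nth [::] (outbox C x.1.1) x.1.2) x.2.

Definition event_of (C : config) (a : option delivery) : event n (Msg A) :=
  match a with
  | None => EvNone
  | Some (inl x) => if msg_at C x is Some (_, m) then EvMsg x.1.1 m else EvNone
  | Some (inr c) => EvResp c false
  end.

Definition enabled (C : config) (p : 'I_n) (a : option delivery) : bool :=
  match a with
  | None => true
  | Some (inl x) =>
      (if msg_at C x is Some (d, _) then d == p else false) && ~~ delivered C x
  | Some (inr c) => queried C p c && ~~ answered C p c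
  end.

Definition delivered_by (C : config) (a : option delivery) : msg_id -> bool :=
  fun y => if a is Some (inl x) then (y == x) || delivered C y else delivered C y.

Definition answered_by (C : config) (p : 'I_n) (a : option delivery) :=
  fun q c => if a is Some (inr c') then ((q == p) && (c == c')) || answered C q c
             else answered C q c.

Definition queried_by (C : config) (p : 'I_n) (o : option (nat * bool)) :=
  fun q c => if o is Some (c', _) then ((q == p) && (c == c')) || queried C q c
             else queried C q c.

Definition fire (C : config) (p : 'I_n) (a : option delivery) : config :=
  let r := step A p (lst C p) (event_of C a) in
  Config (fun q => if q == p then r.1.1 else lst C q)
         (fun q => if q == p then rcons (outbox C p) r.1.2 else outbox C q)
         (delivered_by C a) (queried_by C p r.2) (answered_by C p a).

Definition exec (C : config) (s : seq action) : config :=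
  foldl (fun C x => fire C x.1 x.2) C s.

Fixpoint legal (S : {set 'I_n}) (C : config) (s : seq action) : Prop :=
  if s is x :: s' then [/\ enabled C x.1 x.2, x.1 \notin S & legal S (fire C x.1 x.2) s']
  else True.

Lemma exec_cat C s1 s2 : exec C (s1 ++ s2) = exec (exec C s1) s2.
Proof. by rewrite /exec foldl_cat. Qed.

Lemma exec_rcons C s x : exec C (rcons s x) = fire (exec C s) x.1 x.2.
Proof. by rewrite -cats1 exec_cat. Qed.

Lemma legal_cat S C s1 s2 :
  legal S C (s1 ++ s2) <-> legal S C s1 /\ legal S (exec C s1) s2.
Proof.
elim: s1 C => [|x s1 IH] C /=; first by split=> // [[]].
split; first by case=> en nS /IH [].
by case=> [[en nS l1] l2]; split=> //; apply/IH.
Qed.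

Lemma legal_rcons S C s x : legal S C (rcons s x) <->
  legal S C s /\ [/\ enabled (exec C s) x.1 x.2 & x.1 \notin S].
Proof.
rewrite -cats1 legal_cat /=; split; first by case=> l [en nS _].
by case=> l [en nS].
Qed.

Lemma legal_sub (S S' : {set 'I_n}) C s :
  S' \subset S -> legal S C s -> legal S' C s.
Proof.
move=> sub; elim: s C => [|x s IH] C //= [en nS l]; split=> //; last exact: IH.
by apply: contra nS; apply: (subsetP sub).
Qed.

Lemma legal_nth (S : {set 'I_n}) C s i x0 : legal S C s -> i < size s ->
  enabled (exec C (take i s)) (nth x0 s i).1 (nth x0 s i).2 /\ (nth x0 s i).1 \notin S.
Proof. by elim: s C i => [|x s IH] C [|i] //= [en nS l] ?; [split | apply: IH]. Qed.

Lemma msg_at_fire C p a x v : msg_at C x = Some v -> msg_at (fire C p a) x = Some v.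
Proof.
rewrite /msg_at /fire /=; case: eqP => // -> h.
by rewrite nth_rcons (lookup_nth_size h).
Qed.

Lemma lst_fire_other C p a q : q != p -> lst (fire C p a) q = lst C q.
Proof. by rewrite /fire /= => /negbTE ->. Qed.

Lemma event_of_fire C p a p' a' :
  enabled C p' a' -> event_of (fire C p a) a' = event_of C a'.
Proof.
case: a' => [[x|c]|] //=.
by case E: (msg_at C x) => [[d m]|] // _; rewrite (msg_at_fire _ _ E).
Qed.

Lemma enabled_fire C p a p' a' : enabled C p a -> enabled C p' a' ->
  (p, a) != (p', a') -> enabled (fire C p a) p' a'.
Proof.
move=> en en' ne; case: a' en' ne => [[x|c]|] //=.
- case E: (msg_at C x) => [[d m]|] //= /andP [/eqP dp nd] ne.
  rewrite (msg_at_fire _ _ E) dp eqxx /= /delivered_by.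
  case: a en ne => [[y|c]|] //= en ne.
  rewrite (negbTE nd) orbF; apply/eqP => xy; subst y.
  by move: en ne; rewrite E -dp => /andP [/eqP -> _]; rewrite eqxx.
- move=> /andP [qc nac] ne; rewrite /queried_by /answered_by.
  case: (step A p (lst C p) (event_of C a)).2 => [[c' b]|]; rewrite ?qc ?orbT /=;
  (case: a en ne => [[y|c'']|] //= en ne; rewrite (negbTE nac) orbF;
   apply/negP => /andP [/eqP e1 /eqP e2]; subst;
   by rewrite eqxx in ne).
Qed.

Lemma update_comm (T : Type) (f : 'I_n -> T) p p' v v' : p != p' ->
  (fun q => if q == p' then v' else if q == p then v else f q) =
  (fun q => if q == p then v else if q == p' then v' else f q).
Proof.
move=> npp; apply: funext => q; case: (eqVneq q p) => [->|//].
by rewrite (negbTE npp).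
Qed.

Lemma fire_comm C p a p' a' : p != p' -> enabled C p a -> enabled C p' a' ->
  fire (fire C p a) p' a' = fire (fire C p' a') p a.
Proof.
move=> npp en en'.
have E1 := event_of_fire p a en'; have E2 := event_of_fire p' a' en.
have L1 : lst (fire C p a) p' = lst C p' by rewrite lst_fire_other // eq_sym.
have L2 : lst (fire C p' a') p = lst C p by rewrite lst_fire_other.
rewrite /fire /= in E1 E2 L1 L2 *; rewrite E1 E2 L1 L2 (negbTE npp) eq_sym (negbTE npp).
congr Config; try exact: update_comm.
- rewrite /delivered_by /=; apply: funext => y.
  by case: a {en E1 E2 L1 L2} => [[x|c]|] //; case: a' {en'} => [[x'|c']|] //=;
     rewrite !orbA; congr orb; rewrite orbC.
- rewrite /queried_by /=; apply: funext => q; apply: funext => c.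
  case: (step A p (lst C p) (event_of C a)).2 => [[c1 b1]|];
  case: (step A p' (lst C p') (event_of C a')).2 => [[c2 b2]|] //=;
  by rewrite !orbA; congr orb; rewrite orbC.
- rewrite /answered_by /=; apply: funext => q; apply: funext => c.
  by case: a {en E1 E2 L1 L2} => [[x|c1]|] //; case: a' {en'} => [[x'|c2]|] //=;
     rewrite !orbA; congr orb; rewrite orbC.
Qed.

Lemma exec_fire_comm S C t p a : legal S C t -> p \in S -> enabled C p a ->
  [/\ legal S (fire C p a) t, enabled (exec C t) p a &
      exec (fire C p a) t = fire (exec C t) p a].
Proof.
elim: t C => [|x t IH] C //= [en nS l] pS enp.
have nxp : x.1 != p by apply: contraNneq nS => ->.
have nea : (p, a) != x by apply: contraNneq nxp => <-.
have enx : enabled (fire C p a) x.1 x.2 by apply: enabled_fire; rewrite -?surjective_pairing.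
have enp' : enabled (fire C x.1 x.2) p a.
  by apply: enabled_fire; rewrite -?surjective_pairing // eq_sym.
have [l' en' E] := IH _ l pS enp'.
by rewrite fire_comm 1?eq_sym // E.
Qed.

Lemma crashed_step_invisible S C t p a q : legal S C t -> p \in S -> enabled C p a ->
  q != p -> legal S (fire C p a) t /\ lst (exec (fire C p a) t) q = lst (exec C t) q.
Proof.
move=> l pS en nqp; have [l' _ ->] := exec_fire_comm l pS en.
by rewrite lst_fire_other.
Qed.

Definition init_config (V : ivec n) : config :=
  Config (fun p => init A p (V p)) (fun _ => [::]) (fun _ => false)
         (fun _ _ => false) (fun _ _ => false).

Definition set_lst (C : config) (j : 'I_n) (s : St A) : config :=
  Config (fun q => if q == j then s else lst C q)
         (outbox C) (delivered C) (queried C) (answered C).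

Lemma enabled_set_lst C j s p a : enabled (set_lst C j s) p a = enabled C p a.
Proof. by case: a => [[x|c]|]. Qed.

Lemma fire_set_lst C j s p a : p != j ->
  fire (set_lst C j s) p a = set_lst (fire C p a) j s.
Proof.
move=> npj; have E : event_of (set_lst C j s) a = event_of C a by case: a => [[x|c]|].
rewrite /fire E /set_lst /= (negbTE npj).
by congr Config; apply: update_comm; rewrite eq_sym.
Qed.

Lemma exec_set_lst S C j s t : legal S C t -> j \in S ->
  legal S (set_lst C j s) t /\ exec (set_lst C j s) t = set_lst (exec C t) j s.
Proof.
elim: t C => [|x t IH] C //= [en nS l] jS.
have nxj : x.1 != j by apply: contraNneq nS => ->.
by rewrite fire_set_lst // enabled_set_lst; have [l' ->] := IH _ l jS.
Qed.

Definition crash_pattern (T0 : nat) (K S : {set 'I_n}) : fpattern n :=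
  fun t => if t < T0 then K else S.

Lemma Faulty_crash_pattern T0 (K S : {set 'I_n}) :
  K \subset S -> Faulty (crash_pattern T0 K S) = S.
Proof.
move=> KS; apply/setP => p; rewrite inE; apply/asboolP/idP.
- by case=> t; rewrite /crash_pattern; case: ifP => // _ /(subsetP KS).
- by move=> pS; exists T0; rewrite /crash_pattern ltnn.
Qed.

Lemma crash_pattern_nondecreasing T0 (K S : {set 'I_n}) :
  K \subset S -> fp_nondecreasing (crash_pattern T0 K S).
Proof.
move=> KS t t' le_tt'; rewrite /crash_pattern.
case: ifP => lt1; case: ifP => lt2; rewrite ?subxx //.
by move: (leq_ltn_trans le_tt' lt2); rewrite lt1.
Qed.

Section Realize.
Variables (V : ivec n) (sch : nat -> action).

Fixpoint cfg_at (t : nat) : config :=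
  if t is t'.+1 then fire (cfg_at t') (sch t').1 (sch t').2 else init_config V.

Definition step_out (t : nat) :=
  step A (sch t).1 (lst (cfg_at t) (sch t).1) (event_of (cfg_at t) (sch t).2).

Lemma cfg_at_exec t u : cfg_at (t + u) = exec (cfg_at t) (mkseq (fun i => sch (t + i)) u).
Proof.
elim: u => [|u IH]; first by rewrite addn0.
by rewrite addnS mkseqS exec_rcons -IH.
Qed.

Lemma cfg_at_persist (P : config -> Prop) t t' :
  (forall u, P (cfg_at u) -> P (cfg_at u.+1)) -> t <= t' -> P (cfg_at t) -> P (cfg_at t').
Proof.
move=> PS; apply: (homo_leq (f := id) (r := fun i j => P (cfg_at i) -> P (cfg_at j))).
- by [].
- by move=> j i l Pij Pjl /Pij /Pjl.
- exact: PS.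
Qed.

Definition nsent t q := size (outbox (cfg_at t) q).

Lemma outbox_S t q : outbox (cfg_at t.+1) q =
  if q == (sch t).1 then rcons (outbox (cfg_at t) q) (step_out t).1.2
  else outbox (cfg_at t) q.
Proof. by rewrite /= /fire /=; case: eqP => // ->. Qed.

Lemma nsent_S t q : nsent t.+1 q = nsent t q + (q == (sch t).1).
Proof. by rewrite /nsent outbox_S; case: eqP; rewrite ?size_rcons ?addn1 ?addn0. Qed.

Lemma nsent_mono q : {homo nsent^~ q : t t' / t <= t'}.
Proof.
by apply: homo_leq => [//|y x z|t]; [apply: leq_trans | rewrite nsent_S leq_addr].
Qed.

Lemma nsent_exists t q j :
  j < nsent t q -> exists2 u, u < t & (sch u).1 = q /\ nsent u q = j.
Proof.
elim: t => [|t IH] //; rewrite nsent_S => lt_j.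
case: (ltnP j (nsent t q)) => [/IH [u lt_ut Eu]|le_j]; first by exists u => //; apply: ltnW.
exists t => //; case: eqP lt_j => [<- |_].
  by rewrite addn1 ltnS => ge_j; split=> //; apply/eqP; rewrite eqn_leq ge_j le_j.
by rewrite addn0 => lt; have := leq_trans lt le_j; rewrite ltnn.
Qed.

Lemma nsent_inj u u' q :
  (sch u).1 = q -> (sch u').1 = q -> nsent u q = nsent u' q -> u = u'.
Proof.
wlog lt_uu' : u u' / u < u' => [W Eu Eu' E|Eu _ E].
  by case: (ltngtP u u') => [lt|lt|//]; [exact: W | symmetry; exact: W].
by have := nsent_mono q lt_uu'; rewrite nsent_S Eu eqxx addn1 -E ltnn.
Qed.

Lemma nth_outbox_sent u t q : (sch u).1 = q -> u < t ->
  nth [::] (outbox (cfg_at t) q) (nsent u q) = (step_out u).1.2.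
Proof.
move=> Eu lt_ut; pose P C := nth [::] (outbox C q) (nsent u q) = (step_out u).1.2
                            /\ nsent u q < size (outbox C q).
suff [] : P (cfg_at t) by [].
apply: (cfg_at_persist (P := P) _ lt_ut).
  move=> v [E lt]; rewrite /P outbox_S; case: eqP => // _.
  by rewrite nth_rcons size_rcons lt E ltnS (ltnW lt).
by rewrite /P outbox_S Eu eqxx nth_rcons size_rcons ltnn eqxx.
Qed.

(* The step at which message [(q, j, _)] was sent (a junk [0] if there is
   none). *)
Definition send_time (q : 'I_n) (j : nat) : nat :=
  match pselect (exists u, ((sch u).1 == q) && (nsent u q == j)) with
  | left h => ex_minn h
  | right _ => 0
  end.

Lemma send_timeE u q : (sch u).1 = q -> send_time q (nsent u q) = u.
Proof.
move=> Eu; rewrite /send_time; case: pselect => [h|[]]; last by exists u; rewrite Eu !eqxx.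
by case: (ex_minnP h) => m /andP [/eqP Em /eqP Ej] _; apply: (nsent_inj Em Eu).
Qed.

Lemma send_time_msg t q j : j < nsent t q ->
  exists u, [/\ u < t, (sch u).1 = q, nsent u q = j & send_time q j = u].
Proof. by case/nsent_exists => u lt_ut [Eu Ej]; exists u; rewrite -Ej send_timeE. Qed.

Lemma msg_at_nsent t q j i v : msg_at (cfg_at t) (q, j, i) = Some v -> j < nsent t q.
Proof. exact: (@lookup_nth_size _ (outbox (cfg_at t) q)). Qed.

Lemma msg_at_mono t t' x v :
  t <= t' -> msg_at (cfg_at t) x = Some v -> msg_at (cfg_at t') x = Some v.
Proof.
by apply: (cfg_at_persist (P := fun C => msg_at C x = Some v)) => u; apply: msg_at_fire.
Qed.

Lemma msg_at_fresh t i :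
  msg_at (cfg_at t.+1) ((sch t).1, nsent t (sch t).1, i) = lookup (step_out t).1.2 i.
Proof. by rewrite /msg_at outbox_S /= eqxx nth_rcons ltnn eqxx. Qed.

Lemma delivered_mono t t' x :
  t <= t' -> delivered (cfg_at t) x -> delivered (cfg_at t') x.
Proof.
apply: (cfg_at_persist (P := fun C => delivered C x)) => u dx.
by rewrite /= /delivered_by; case: (sch u).2 => [[y|c]|]; rewrite ?dx ?orbT.
Qed.

Lemma answered_mono t t' p c :
  t <= t' -> answered (cfg_at t) p c -> answered (cfg_at t') p c.
Proof.
apply: (cfg_at_persist (P := fun C => answered C p c)) => u ac.
by rewrite /= /answered_by; case: (sch u).2 => [[y|c']|]; rewrite ?ac ?orbT.
Qed.

Lemma delivered_fired t t' x :
  (sch t).2 = Some (inl x) -> t < t' -> delivered (cfg_at t') x.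
Proof. by move=> Et /delivered_mono; apply; rewrite /= /delivered_by Et eqxx. Qed.

Lemma answered_fired t t' p c :
  sch t = (p, Some (inr c)) -> t < t' -> answered (cfg_at t') p c.
Proof. by move=> Et /answered_mono; apply; rewrite /= /answered_by Et /= !eqxx. Qed.

Lemma fired_disabled t t' p d :
  sch t = (p, Some d) -> t < t' -> ~~ enabled (cfg_at t') p (Some d).
Proof.
case: d => [x|c] Et lt_tt' /=.
- by rewrite (delivered_fired _ lt_tt') ?Et // andbF.
- by rewrite (answered_fired Et lt_tt') andbF.
Qed.

Lemma queried_S t c b : (step_out t).2 = Some (c, b) -> queried (cfg_at t.+1) (sch t).1 c.
Proof. by move=> E; rewrite /= /queried_by /step_out E !eqxx. Qed.

Lemma queried_inv t p c : queried (cfg_at t) p c ->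
  exists2 u, u < t & (sch u).1 = p /\ exists b, (step_out u).2 = Some (c, b).
Proof.
elim: t => [|t IH] //=; rewrite /queried_by -/(step_out t).
have W u : u < t -> u < t.+1 by apply: ltnW.
case E: (step_out t).2 => [[c' b]|]; last by case/IH => u /W; exists u.
case/orP => [/andP [/eqP -> /eqP ->]|/IH [u /W]].
  by exists t => //; split=> //; exists b.
by exists u.
Qed.

Lemma answered_inv t p c :
  answered (cfg_at t) p c -> exists2 u, u < t & sch u = (p, Some (inr c)).
Proof.
elim: t => [|t IH] //=; rewrite /answered_by.
have W u : u < t -> u < t.+1 by apply: ltnW.
case E: (sch t) => [q [[x|c']|]] /=; try by case/IH => u /W; exists u.
case/orP => [/andP [/eqP -> /eqP ->]|/IH [u /W]]; first by exists t.
by exists u.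
Qed.

Hypothesis sch_enabled : forall t, enabled (cfg_at t) (sch t).1 (sch t).2.

Lemma legal_segment (S : {set 'I_n}) t u :
  (forall i, t <= i < t + u -> (sch i).1 \notin S) ->
  legal S (cfg_at t) (mkseq (fun i => sch (t + i)) u).
Proof.
elim: u => [|u IH] // nS; rewrite mkseqS; apply/legal_rcons; split.
  by apply: IH => i /andP [le_ti lt_i]; apply: nS; rewrite le_ti addnS ltnS; apply: ltnW.
rewrite -cfg_at_exec; split; first exact: sch_enabled.
by apply: nS; rewrite leq_addr addnS ltnSn.
Qed.

Lemma delivered_nsent t q j i : delivered (cfg_at t) (q, j, i) -> j < nsent t q.
Proof.
elim: t => [|t IH] //; rewrite nsent_S /= /delivered_by => dx.
apply: ltn_addr; move: dx; have := sch_enabled t.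
case: (sch t).2 => [[x|c]|] //=.
case Ex: msg_at => [[d m]|] // _ /orP [/eqP ex|]; last exact: IH.
by move: Ex; rewrite -ex => /msg_at_nsent.
Qed.

Lemma fresh_undelivered t q i : ~~ delivered (cfg_at t.+1) (q, nsent t q, i).
Proof.
rewrite /= /delivered_by; apply/negP; have := sch_enabled t.
case: (sch t).2 => [[x|c]|] //=; try by move=> _ /delivered_nsent; rewrite ltnn.
case Ex: msg_at => [[d m]|] // _ /orP [/eqP ex|/delivered_nsent]; last by rewrite ltnn.
by move: Ex; rewrite -ex => /msg_at_nsent; rewrite ltnn.
Qed.

Lemma event_msg_inv t q m : event_of (cfg_at t) (sch t).2 = EvMsg q m ->
  exists j i, (sch t).2 = Some (inl (q, j, i)) /\
              msg_at (cfg_at t) (q, j, i) = Some ((sch t).1, m).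
Proof.
have := sch_enabled t; case: (sch t).2 => [[[[q' j] i]|c]|] //= /andP [en _].
by case E: msg_at en => [[d m']|] //= /eqP <- [<- <-]; exists j, i.
Qed.

Lemma event_resp_inv t c d : event_of (cfg_at t) (sch t).2 = EvResp c d ->
  (sch t).2 = Some (inr c) /\ d = false.
Proof.
case: (sch t).2 => [[x|c']|] //=; last by case=> -> ->.
by case: msg_at => [[]|].
Qed.

Lemma enabled_persist_range t t' p a : t <= t' -> enabled (cfg_at t) p a ->
  (forall u, t <= u -> u < t' -> sch u != (p, a)) -> enabled (cfg_at t') p a.
Proof.
move/subnK => <-; elim: (t' - t) => [|d IH] // en nfired.
rewrite addSn /=; apply: enabled_fire; rewrite -?surjective_pairing.
- exact: sch_enabled.
- apply: IH => // u le_tu lt_u; apply: nfired; rewrite // ltnS; exact: ltnW.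
- by apply: nfired; rewrite ?leq_addl // addSn.
Qed.

Lemma delivered_once t t' x : t < t' ->
  (sch t).2 = Some (inl x) -> (sch t').2 = Some (inl x) -> False.
Proof.
move=> lt_tt' Et Et'; have := sch_enabled t'; rewrite Et' /=.
by rewrite (delivered_fired Et lt_tt') andbF.
Qed.

Section Admissible.
Variables (T0 : nat) (K S : {set 'I_n}) (T2 : task n).
Hypothesis KS : K \subset S.
Hypothesis sch_crash : forall t, (sch t).1 \notin crash_pattern T0 K S t.
Hypothesis sch_live : forall p, p \notin S -> forall t, exists2 t', t <= t' & (sch t').1 = p.
Hypothesis sch_fair : forall p, p \notin S -> forall t d,
  enabled (cfg_at t) p (Some d) -> exists2 t', t <= t' & sch t' = (p, Some d).
Hypothesis zero_allowed : forall V', tprob T2 (crash_pattern T0 K S) V' false.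

Definition run_of : run A :=
  Run (fun t => Some (sch t).1) (fun t => event_of (cfg_at t) (sch t).2)
      (fun t => if (sch t).2 is Some (inl x) then (send_time x.1.1 x.1.2, x.2) else (0, 0))
      (fun _ => Some false).

Lemma conf_run_of t : conf V run_of t = lst (cfg_at t).
Proof.
elim: t => [|t IH] //=; apply: funext => p /=; rewrite IH.
case: (eqVneq p (sch t).1) => [->|np]; rewrite ?eqxx //=.
by case: eqP => // -[e]; rewrite e eqxx in np.
Qed.

Lemma sent_run_of t : sent V run_of t = (step_out t).1.2.
Proof. by rewrite /sent /= conf_run_of. Qed.

Lemma qry_run_of t : qry V run_of t = (step_out t).2.
Proof. by rewrite /qry /= conf_run_of. Qed.

Lemma run_of_no_creation t p q m :
  sched run_of t = Some p -> evt run_of t = EvMsg q m ->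
  (src run_of t).1 < t /\ sched run_of (src run_of t).1 = Some q /\
  lookup (sent V run_of (src run_of t).1) (src run_of t).2 = Some (p, m).
Proof.
move=> /= [<-] /event_msg_inv [j [i [E hm]]].
have [u [lt_ut Eu Ej Es]] := send_time_msg (msg_at_nsent hm).
rewrite E /= Es Eu sent_run_of -(nth_outbox_sent Eu lt_ut) Ej.
by split=> //; split.
Qed.

Lemma run_of_no_duplication t1 t2 p1 p2 q1 q2 m1 m2 : t1 <> t2 ->
  sched run_of t1 = Some p1 -> evt run_of t1 = EvMsg q1 m1 ->
  sched run_of t2 = Some p2 -> evt run_of t2 = EvMsg q2 m2 ->
  src run_of t1 <> src run_of t2.
Proof.
move=> ne _ /event_msg_inv [j1 [i1 [E1 hm1]]] _ /event_msg_inv [j2 [i2 [E2 hm2]]].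
have [u1 [_ Eu1 Ej1 Es1]] := send_time_msg (msg_at_nsent hm1).
have [u2 [_ Eu2 Ej2 Es2]] := send_time_msg (msg_at_nsent hm2).
rewrite /= E1 E2 /= Es1 Es2 => -[eu ei]; subst i2.
move: Eu2 Ej2; rewrite -eu Eu1 => eq_q; subst q2; rewrite Ej1 => eq_j; subst j2.
by case: (ltngtP t1 t2) => [lt|lt|//];
  [apply: delivered_once lt E1 E2 | apply: delivered_once lt E2 E1].
Qed.

Lemma run_of_reliable t' i q p m :
  sched run_of t' = Some q -> lookup (sent V run_of t') i = Some (p, m) ->
  p \notin Faulty (crash_pattern T0 K S) ->
  exists t, [/\ sched run_of t = Some p, evt run_of t = EvMsg q m & src run_of t = (t', i)].
Proof.
move=> /= [Eq]; rewrite sent_run_of Faulty_crash_pattern // => hl pS.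
have hm := msg_at_fresh t' i; rewrite hl Eq in hm.
have en : enabled (cfg_at t'.+1) p (Some (inl (q, nsent t' q, i))).
  by rewrite /= hm eqxx fresh_undelivered.
have [t le_t Et] := sch_fair pS en; exists t; rewrite /= Et /=.
by rewrite (msg_at_mono le_t hm) -Eq send_timeE.
Qed.

Lemma run_of_responses t p c d :
  sched run_of t = Some p -> evt run_of t = EvResp c d ->
  [/\ resp run_of c = Some d, queried_before V run_of p c t &
      forall t' d', t' < t -> sched run_of t' = Some p -> evt run_of t' <> EvResp c d'].
Proof.
move=> /= [Ep] /event_resp_inv [E ->]; have := sch_enabled t.
rewrite E Ep /= => /andP [qc nac]; split=> //.
  have [u lt_ut [Eu [b Eb]]] := queried_inv qc.
  by exists u, b; rewrite qry_run_of /= Eu.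
move=> t' d' lt_t' [Ep'] /event_resp_inv [E' _].
have Et' : sch t' = (p, Some (inr c)) by rewrite -Ep' -E' -surjective_pairing.
by rewrite (answered_fired Et' lt_t') in nac.
Qed.

Lemma run_of_answers_queries c p b :
  p \notin Faulty (crash_pattern T0 K S) -> Wq V run_of c p b ->
  exists t, sched run_of t = Some p /\ evt run_of t = EvResp c false.
Proof.
rewrite Faulty_crash_pattern // => pS [t0 [/= [Ep] Eq _]].
rewrite qry_run_of in Eq; have := queried_S Eq; rewrite Ep => qc.
case ac: (answered (cfg_at t0.+1) p c).
  by have [u _ Eu] := answered_inv ac; exists u; rewrite /= Eu.
have [|t _ Et] := sch_fair pS (d := inr c) (t := t0.+1); first by rewrite /enabled qc ac.
by exists t; rewrite /= Et.
Qed.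

Theorem run_of_admissible consistent :
  admissible V run_of T2 consistent (crash_pattern T0 K S).
Proof.
split; first by move=> t p /= [<-]; apply: sch_crash.
split.
  move=> p; rewrite Faulty_crash_pattern // => pS t.
  by have [t' le_t Et'] := sch_live pS t; exists t'; rewrite /= Et'.
split; first exact: run_of_no_creation.
split; first exact: run_of_no_duplication.
split; first exact: run_of_reliable.
split; first exact: run_of_responses.
split; first by move=> c d /= [<-] V' _; apply: zero_allowed.
split; last by move=> _ c1 c2 d _ /= [<-].
move=> c S' _ _; exists false; split=> // p pS [b Wb].
exact: run_of_answers_queries pS Wb.
Qed.

End Admissible.
End Realize.

Lemma enabled_exec (S : {set 'I_n}) C s p a :
  enabled C p a -> legal S C s -> (p, a) \notin s -> enabled (exec C s) p a.
Proof.
elim: s C => [|x s IH] C //= en [enx _ l]; rewrite inE negb_or => /andP [ne ni].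
by apply: IH => //; apply: enabled_fire; rewrite -?surjective_pairing // eq_sym.
Qed.

(* Fair scheduling: starting with [s0] (steps by processes outside [K]), the
   processes outside [S] are served in round robin; each one takes its
   enabled delivery of least code, after a detour that reaches a [Good]
   configuration again. *)
Section FairSchedule.
Variables (V : ivec n) (K S : {set 'I_n}) (Good : config -> Prop)
          (s0 : seq action) (p0 : 'I_n).
Hypothesis p0S : p0 \notin S.
Hypothesis legal_s0 : legal K (init_config V) s0.
Hypothesis good_s0 : Good (exec (init_config V) s0).
Hypothesis good_extend : forall C p a, Good C -> p \notin S -> enabled C p a ->
  exists s, [/\ legal S C s, enabled (exec C s) p a & Good (fire (exec C s) p a)].

Definition detour C p a : seq action :=
  match pselect (exists s, [/\ legal S C s, enabled (exec C s) p a &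
                               Good (fire (exec C s) p a)]) with
  | left h => proj1_sig (cid h)
  | right _ => [::]
  end.

Lemma detourP C p a : Good C -> p \notin S -> enabled C p a ->
  [/\ legal S C (detour C p a), enabled (exec C (detour C p a)) p a &
      Good (fire (exec C (detour C p a)) p a)].
Proof.
move=> g pS en; rewrite /detour; case: pselect => [h|[]]; last exact: good_extend.
exact: (proj2_sig (cid h)).
Qed.

Lemma n_gt0 : 0 < n.
Proof. exact: leq_ltn_trans (leq0n p0) (ltn_ord p0). Qed.

Definition turn (s : nat) : 'I_n :=
  let q := Ordinal (ltn_pmod s n_gt0) in if q \in S then p0 else q.

Lemma turn_notin s : turn s \notin S.
Proof. by rewrite /turn; case: ifP => // /negbT. Qed.

Lemma turn_mod t p : p \notin S -> turn (t * n + p) = p.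
Proof.
move=> pS; have E : Ordinal (ltn_pmod (t * n + p) n_gt0) = p.
  by apply: val_inj; rewrite /= modnMDl modn_small.
by rewrite /turn E (negbTE pS).
Qed.

Lemma leq_muln_add t (p : 'I_n) : t <= t * n + p.
Proof. by rewrite (leq_trans _ (leq_addr _ _)) // leq_pmulr // n_gt0. Qed.

Definition enabled_code C p (c : nat) : bool :=
  if pickle_inv c is Some d then enabled C p (Some d) else false.

Definition first_enabled C p : option delivery :=
  match pselect (exists c, enabled_code C p c) with
  | left h => pickle_inv (ex_minn h)
  | right _ => None
  end.

Lemma first_enabled_enabled C p : enabled C p (first_enabled C p).
Proof.
rewrite /first_enabled; case: pselect => // h; case: (ex_minnP h) => m.
by rewrite /enabled_code; case: pickle_inv.
Qed.

Lemma first_enabled_min C p d : enabled C p (Some d) ->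
  exists e, [/\ first_enabled C p = Some e, pickle e <= pickle d & enabled C p (Some e)].
Proof.
move=> en; have cd : enabled_code C p (pickle d) by rewrite /enabled_code pickleK_inv.
rewrite /first_enabled; case: pselect => [h|[]]; last by exists (pickle d).
case: (ex_minnP h) => m; rewrite /enabled_code.
case E: (pickle_inv m) => [e|] // ene min_m; exists e; split=> //.
by have := @pickle_invK delivery m; rewrite E /= => ->; apply: min_m.
Qed.

Definition cfg_of s := exec (init_config V) s.

Fixpoint stage (s : nat) : seq action :=
  if s is s'.+1 then
    let C := cfg_of (stage s') in
    stage s' ++ rcons (detour C (turn s') (first_enabled C (turn s')))
                      (turn s', first_enabled C (turn s'))
  else s0.

Definition built t := nth (p0, None) (stage t.+1) t.

Lemma size_stage_grow s : size (stage s) < size (stage s.+1).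
Proof. by rewrite /= size_cat size_rcons addnS ltnS leq_addr. Qed.

Lemma size_stage s : s <= size (stage s).
Proof. by elim: s => [|s IH] //; apply: leq_ltn_trans IH (size_stage_grow s). Qed.

Lemma stage_prefix s s' : s <= s' -> exists l, stage s' = stage s ++ l.
Proof.
move/subnK => <-; elim: (s' - s) => [|d [l IH]]; first by exists [::]; rewrite cats0.
by rewrite addSn /= IH; eexists; rewrite -catA.
Qed.

Lemma built_nth s t : t < size (stage s) -> built t = nth (p0, None) (stage s) t.
Proof.
move=> lt_t; rewrite /built; case: (leqP s t.+1) => [le_s|lt_s].
  by case: (stage_prefix le_s) => l ->; rewrite nth_cat lt_t.
case: (stage_prefix (ltnW lt_s)) => l ->.
by rewrite [RHS]nth_cat (leq_trans (ltnSn t) (size_stage t.+1)).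
Qed.

Lemma cfg_at_built s t : t <= size (stage s) -> cfg_at V built t = cfg_of (take t (stage s)).
Proof.
move=> le_t; have := cfg_at_exec V built 0 t; rewrite add0n => ->.
congr exec; apply: (@eq_from_nth _ (p0, None)); first by rewrite size_mkseq size_takel.
move=> i; rewrite size_mkseq => lt_i; rewrite nth_mkseq // nth_take // add0n.
by apply: built_nth; apply: leq_trans le_t.
Qed.

Lemma cfg_at_stage s : cfg_at V built (size (stage s)) = cfg_of (stage s).
Proof. by rewrite (cfg_at_built (leqnn _)) take_size. Qed.

Lemma stage_prefix0 s : stage s = s0 ++ drop (size s0) (stage s).
Proof. by case: (stage_prefix (leq0n s)) => l ->; rewrite drop_cat ltnn subnn drop0. Qed.

Lemma stage_inv s :
  Good (cfg_of (stage s)) /\ legal S (cfg_of s0) (drop (size s0) (stage s)).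
Proof.
elim: s => [|s [g l]]; first by rewrite drop_size.
have E : cfg_of (stage s) = exec (cfg_of s0) (drop (size s0) (stage s)).
  by rewrite /cfg_of -exec_cat -stage_prefix0.
have [ld en gd] := detourP g (turn_notin s) (first_enabled_enabled _ (turn s)).
split; first by rewrite /= /cfg_of exec_cat -/(cfg_of (stage s)) exec_rcons.
have le_s0 : size s0 <= size (stage s) by rewrite (stage_prefix0 s) size_cat leq_addr.
rewrite /= drop_cat; case: ltngtP le_s0 => // [lt|eq] _.
  by apply/legal_cat; split=> //; rewrite -E; apply/legal_rcons; split; rewrite ?turn_notin.
rewrite eq drop_size /= in E; rewrite eq subnn drop0; apply/legal_rcons; rewrite -E.
by split; rewrite ?turn_notin.
Qed.

Lemma built_props t : enabled (cfg_at V built t) (built t).1 (built t).2 /\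
  (built t).1 \notin crash_pattern (size s0) K S t.
Proof.
have lt_t : t < size (stage t.+1) := size_stage t.+1.
rewrite (cfg_at_built (ltnW lt_t)) (built_nth lt_t) (stage_prefix0 t.+1) nth_cat take_cat.
rewrite /crash_pattern; case: ifP => lt_ts0; first exact: legal_nth.
have [_ l] := stage_inv t.+1.
have lt_d : t - size s0 < size (drop (size s0) (stage t.+1)).
  move: lt_t lt_ts0; rewrite {1}(stage_prefix0 t.+1) size_cat; lia.
by have := legal_nth (p0, None) l lt_d; rewrite /cfg_of exec_cat.
Qed.

Lemma built_enabled t : enabled (cfg_at V built t) (built t).1 (built t).2.
Proof. by case: (built_props t). Qed.

Lemma stage_last s :
  built (size (stage s.+1)).-1 = (turn s, first_enabled (cfg_of (stage s)) (turn s)) /\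
  size (stage s) <= (size (stage s.+1)).-1.
Proof.
have lt_s := size_stage_grow s; have gt0 : 0 < size (stage s.+1) by apply: leq_ltn_trans lt_s.
split; last by rewrite -ltnS prednK.
by rewrite (built_nth (s := s.+1)) ?prednK // nth_last /= last_cat last_rcons.
Qed.

Lemma built_fair_below p d T t : p \notin S ->
  (forall t', T <= t' -> forall e, pickle e < pickle d ->
     ~~ enabled (cfg_at V built t') p (Some e)) ->
  enabled (cfg_at V built t) p (Some d) -> exists2 t', t <= t' & built t' = (p, Some d).
Proof.
move=> pS small en.
case: (pselect (exists2 t', t <= t' & built t' = (p, Some d))) => // nfired; exfalso.
have stay t' : t <= t' -> enabled (cfg_at V built t') p (Some d).
  move=> le; apply: (enabled_persist_range built_enabled le en) => u le_u _.
  by apply/eqP => Eu; apply: nfired; exists u.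
pose s := maxn t T * n + p.
have le_s : maxn t T <= size (stage s) by apply: leq_trans (size_stage s); apply: leq_muln_add.
have := stay _ (leq_trans (leq_maxl _ _) le_s); rewrite cfg_at_stage => ens.
have [e [Ee le_e ene]] := first_enabled_min ens.
have [Elast le_last] := stage_last s; move: Elast; rewrite /s turn_mod // -/s Ee.
case: (ltngtP (pickle e) (pickle d)) le_e => // [lt|eq] _.
  by have := small _ (leq_trans (leq_maxr _ _) le_s) _ lt; rewrite cfg_at_stage ene.
rewrite (pcan_inj pickleK eq) => Elast; apply: nfired.
exists (size (stage s.+1)).-1 => //.
by apply: leq_trans le_last; apply: leq_trans le_s; apply: leq_maxl.
Qed.

Lemma built_eventually_disabled p N : p \notin S -> exists T, forall t', T <= t' ->
  forall e, pickle e < N -> ~~ enabled (cfg_at V built t') p (Some e).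
Proof.
move=> pS; elim: N => [|N [T small]]; first by exists 0.
have small_later T' : T <= T' -> forall t', T' <= t' -> forall e, pickle e < N ->
    ~~ enabled (cfg_at V built t') p (Some e).
  by move=> le_T t' le_t'; apply: small; apply: leq_trans le_t'.
case: (pselect (exists d, pickle d = N /\ exists2 t0, T <= t0 &
                 enabled (cfg_at V built t0) p (Some d))) => [[d [Ed [t0 le_t0 en]]]|none].
  have [|t1 le_t1 Et1] := built_fair_below (T := T) pS _ en; first by rewrite Ed.
  exists (maxn T t1.+1) => t' le_t' e; rewrite ltnS leq_eqVlt => /orP [/eqP Ee|].
    rewrite -Ed in Ee; rewrite (pcan_inj pickleK Ee).
    by apply: (fired_disabled V Et1); apply: leq_trans le_t'; apply: leq_maxr.
  by apply: small_later le_t' _; apply: leq_maxl.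
exists T => t' le_t' e; rewrite ltnS leq_eqVlt => /orP [/eqP Ee|]; last exact: small.
by apply/negP => en; apply: none; exists e; split=> //; exists t'.
Qed.

Theorem fair_schedule : exists sch : nat -> action,
  [/\ forall t, enabled (cfg_at V sch t) (sch t).1 (sch t).2,
      forall t, (sch t).1 \notin crash_pattern (size s0) K S t,
      forall p, p \notin S -> forall t, exists2 t', t <= t' & (sch t').1 = p,
      forall p, p \notin S -> forall t d, enabled (cfg_at V sch t) p (Some d) ->
        exists2 t', t <= t' & sch t' = (p, Some d) &
      (forall t, t <= size s0 -> cfg_at V sch t = cfg_of (take t s0)) /\
      (forall t, exists2 t', t <= t' & Good (cfg_at V sch t'))].
Proof.
exists built; split.
- exact: built_enabled.
- by move=> t; case: (built_props t).
- move=> p pS t; have [Elast le_last] := stage_last (t * n + p).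
  exists (size (stage (t * n + p).+1)).-1; last by rewrite Elast turn_mod.
  by rewrite (leq_trans _ le_last) // (leq_trans (leq_muln_add t p)) ?size_stage.
- move=> p pS t d en; have [T small] := built_eventually_disabled (pickle d) pS.
  exact: built_fair_below pS small en.
split; first by move=> t le_t; rewrite (cfg_at_built (s := 0)).
move=> t; exists (size (stage t)); first exact: size_stage.
by rewrite cfg_at_stage; case: (stage_inv t).
Qed.

End FairSchedule.

Lemma trivial_detour (S : {set 'I_n}) C p a : True -> p \notin S -> enabled C p a ->
  exists s, [/\ legal S C s, enabled (exec C s) p a & True].
Proof. by move=> _ _ en; exists [::]. Qed.

Section Impossibility.
Variables (k f : nat).
Hypothesis lt_kf : k < f.
Hypothesis lt_fn : f < n.
Hypothesis A_solves : solves A (ConsT n f) (kTAg n k f) true.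

Lemma leq_kn : k <= n.
Proof. by apply: ltnW; apply: ltn_trans lt_kf lt_fn. Qed.

Definition K : {set 'I_n} := [set widen_ord leq_kn i | i in 'I_k].

Lemma card_K : #|K| = k.
Proof. by rewrite card_imset ?card_ord // => i j /(congr1 val) /= /val_inj. Qed.

Lemma card_K_le_f : #|K| <= f.
Proof. by rewrite card_K ltnW. Qed.

Lemma card_KU1 (p : 'I_n) : #|K :|: [set p]| <= f.
Proof. by rewrite cardsU cards1 card_K (leq_trans (leq_subr _ _)) // addn1. Qed.

Lemma fair_run_correct V sch T0 (S : {set 'I_n}) :
  (forall t, enabled (cfg_at V sch t) (sch t).1 (sch t).2) ->
  (forall t, (sch t).1 \notin crash_pattern T0 K S t) ->
  (forall p, p \notin S -> forall t, exists2 t', t <= t' & (sch t').1 = p) ->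
  (forall p, p \notin S -> forall t d, enabled (cfg_at V sch t) p (Some d) ->
     exists2 t', t <= t' & sch t' = (p, Some d)) ->
  K \subset S -> #|S| <= f ->
  [/\ forall p, p \notin S -> exists t d, decision A (lst (cfg_at V sch t) p) = Some d,
      forall p t t' d, t <= t' -> decision A (lst (cfg_at V sch t) p) = Some d ->
        decision A (lst (cfg_at V sch t') p) = Some d,
      forall p q t t' d1 d2, decision A (lst (cfg_at V sch t) p) = Some d1 ->
        decision A (lst (cfg_at V sch t') q) = Some d2 -> d1 = d2 &
      forall p t d, decision A (lst (cfg_at V sch t) p) = Some d ->
        kTAg_prob n (crash_pattern T0 K S) V d].
Proof.
move=> en crash live fair KS le_Sf.
have zero V' : kTAg_prob k (crash_pattern T0 K S) V' false.
  by apply: kTAg_prob_false; rewrite Faulty_crash_pattern // -card_K subset_leq_card.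
have adm := run_of_admissible (T2 := kTAg n k f) en KS crash live fair zero true.
have [|term [irr [agr val]]] := A_solves (crash_pattern_nondecreasing T0 KS) _ adm.
  by rewrite Faulty_crash_pattern.
split.
- move=> p pS; have [|t [d dec]] := term p; first by rewrite Faulty_crash_pattern.
  by exists t, d; rewrite -conf_run_of.
- by move=> p t t' d le; rewrite -!conf_run_of; apply: irr.
- by move=> p q t t' d1 d2; rewrite -!conf_run_of; apply: agr.
- by move=> p t d; rewrite -conf_run_of; apply: val.
Qed.

Lemma exists_notin_K : exists p, p \notin K.
Proof. by apply: exists_notin_set; rewrite card_K; apply: ltn_trans lt_kf lt_fn. Qed.

Lemma legal_correct V s : legal K (init_config V) s ->
  [/\ forall i j p d, i <= j <= size s ->
        decision A (lst (cfg_of V (take i s)) p) = Some d ->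
        decision A (lst (cfg_of V (take j s)) p) = Some d,
      forall i j p q d1 d2, i <= size s -> j <= size s ->
        decision A (lst (cfg_of V (take i s)) p) = Some d1 ->
        decision A (lst (cfg_of V (take j s)) q) = Some d2 -> d1 = d2 &
      forall p d, decision A (lst (cfg_of V s) p) = Some d ->
        kTAg_prob n (crash_pattern (size s) K K) V d].
Proof.
move=> l; have [p0 p0K] := exists_notin_K.
have [sch [en crash live fair [prefix _]]] :=
  fair_schedule p0K l I (@trivial_detour K).
have [_ irr agr val] := fair_run_correct en crash live fair (subxx K) card_K_le_f.
split.
- by move=> i j p d /andP [le_ij le_j]; rewrite -!prefix ?(leq_trans le_ij) //; apply: irr.
- by move=> i j p q d1 d2 le_i le_j; rewrite -!prefix //; apply: agr.
- by move=> p d; rewrite -{1}(take_size s) -prefix //; apply: val.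
Qed.

Definition reachable C := exists V s, legal K (init_config V) s /\ C = cfg_of V s.

Lemma reachable_init V : reachable (init_config V).
Proof. by exists V, [::]. Qed.

Lemma reachable_exec C t : reachable C -> legal K C t -> reachable (exec C t).
Proof.
move=> [V [s [l ->]]] lt; exists V, (s ++ t); rewrite /cfg_of exec_cat.
by split=> //; apply/legal_cat.
Qed.

Lemma reachable_decides C (S : {set 'I_n}) : reachable C -> K \subset S -> #|S| <= f ->
  exists2 t, legal S C t &
    exists q d, q \notin S /\ decision A (lst (exec C t) q) = Some d.
Proof.
move=> [V [s [l ->]]] KS le_Sf; have [p0 p0S] := exists_notin_set (leq_ltn_trans le_Sf lt_fn).
have [sch [en crash live fair [prefix _]]] := fair_schedule p0S l I (@trivial_detour S).
have [term irr _ _] := fair_run_correct en crash live fair KS le_Sf.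
have [t [d dec]] := term _ p0S; pose t' := maxn t (size s).
have Es : cfg_of V s = cfg_at V sch (size s) by rewrite prefix // take_size.
exists (mkseq (fun i => sch (size s + i)) (t' - size s)).
  rewrite Es; apply: legal_segment => // i /andP [le_i _].
  by have := crash i; rewrite /crash_pattern ltnNge le_i.
exists p0, d; split=> //.
by rewrite Es -cfg_at_exec subnKC ?leq_maxr // (irr _ _ _ _ (leq_maxl _ _) dec).
Qed.

Lemma reachable_irrevocable C t p d : reachable C -> legal K C t ->
  decision A (lst C p) = Some d -> decision A (lst (exec C t) p) = Some d.
Proof.
move=> [V [s [l ->]]] lt.
have [irr _ _] := legal_correct (proj2 (legal_cat _ _ _ _) (conj l lt)).
have := irr (size s) (size (s ++ t)) p d; rewrite take_size take_size_cat // /cfg_of exec_cat.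
by apply; rewrite size_cat leq_addr leqnn.
Qed.

Lemma reachable_agree C t p q d1 d2 : reachable C -> legal K C t ->
  decision A (lst C p) = Some d1 -> decision A (lst (exec C t) q) = Some d2 -> d1 = d2.
Proof.
move=> [V [s [l ->]]] lt.
have [_ agr _] := legal_correct (proj2 (legal_cat _ _ _ _) (conj l lt)).
have := agr (size s) (size (s ++ t)) p q d1 d2.
rewrite take_size take_size_cat // /cfg_of exec_cat.
by apply; rewrite ?size_cat ?leq_addr.
Qed.

Definition valent C d :=
  exists2 t, legal K C t & exists q, decision A (lst (exec C t) q) = Some d.

Definition bivalent C := valent C true /\ valent C false.

Lemma bivalentI C d : valent C d -> valent C (~~ d) -> bivalent C.
Proof. by case: d => v v'; split. Qed.

Lemma reachable_valent C : reachable C -> exists d, valent C d.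
Proof.
move=> rC; have [t l [q [d [_ dec]]]] := reachable_decides rC (subxx K) card_K_le_f.
by exists d, t => //; exists q.
Qed.

Lemma valent_fire C x d : enabled C x.1 x.2 -> x.1 \notin K ->
  valent (fire C x.1 x.2) d -> valent C d.
Proof. by move=> en xK [t l dec]; exists (x :: t). Qed.

Lemma crash_one_decides C p : reachable C -> exists t q d,
  [/\ legal (K :|: [set p]) C t, q != p & decision A (lst (exec C t) q) = Some d].
Proof.
move=> rC; have [t l [q [d [qS dec]]]] := reachable_decides rC (subsetUl _ _) (card_KU1 p).
exists t, q, d; split=> //; apply: contraNneq qS => ->.
by rewrite !inE eqxx orbT.
Qed.

(* If [x] is a step of [p], crash [p] and let the others decide; otherwise
   [x] and [(p, a)] commute. *)
Lemma adjacent_common_valence C x p a : reachable C -> p \notin K -> enabled C p a ->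
  enabled C x.1 x.2 -> x.1 \notin K -> x != (p, a) ->
  exists d, valent (fire C p a) d /\ valent (fire (fire C x.1 x.2) p a) d.
Proof.
move=> rC pK en enx xK nex.
have enpx : enabled (fire C x.1 x.2) p a by apply: enabled_fire; rewrite -?surjective_pairing.
case: (eqVneq x.1 p) => [Ex|nxp].
  have [t [q [d [l nqp dec]]]] := crash_one_decides p rC.
  have pS : p \in K :|: [set p] by rewrite !inE eqxx orbT.
  have KS : K \subset K :|: [set p] := subsetUl _ _.
  have [l1 E1] := crashed_step_invisible l pS en nqp.
  rewrite Ex in enx enpx *; have [l2 E2] := crashed_step_invisible l pS enx nqp.
  have [l3 E3] := crashed_step_invisible l2 pS enpx nqp.
  exists d; split; exists t.
  - exact: legal_sub KS l1.
  - by exists q; rewrite E1.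
  - exact: legal_sub KS l3.
  - by exists q; rewrite E3 E2.
have rX : reachable (fire (fire C x.1 x.2) p a).
  have -> : fire (fire C x.1 x.2) p a = exec C [:: x; (p, a)] by [].
  by apply: reachable_exec.
have [d v] := reachable_valent rX; exists d; split=> //.
have enxp : enabled (fire C p a) x.1 x.2.
  by apply: enabled_fire; rewrite -?surjective_pairing // eq_sym.
by apply: valent_fire enxp xK _; rewrite -fire_comm.
Qed.

Lemma valent_postpone C p a d : reachable C -> p \notin K -> enabled C p a -> valent C d ->
  exists s, [/\ legal K C s, (p, a) \notin s & valent (fire (exec C s) p a) d].
Proof.
move=> rC pK en [t l [q dec]]; case: (boolP ((p, a) \in t)) => [pat|npat].
  pose i := index (p, a) t.
  have Et : t = take i t ++ (p, a) :: drop i.+1 t.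
    by rewrite -{1}(cat_take_drop i t) (drop_nth (p, a)) ?index_mem // nth_index.
  move: l; rewrite {1}Et => /legal_cat [l1 [_ _ l2]].
  exists (take i t); split=> //; first by rewrite in_take ?ltnn.
  by exists (drop i.+1 t) => //; exists q; move: dec; rewrite {1}Et exec_cat.
exists t; split=> //; exists [::] => //; exists q => /=.
have l1 : legal K (exec C t) [:: (p, a)] by split=> //; apply: enabled_exec en l npat.
by apply: (reachable_irrevocable (t := [:: (p, a)])) dec => //; apply: reachable_exec.
Qed.

Definition good C := reachable C /\ bivalent C.

(* Lemma 3 of Fischer, Lynch and Paterson. *)
Lemma bivalent_extension C p a : good C -> p \notin K -> enabled C p a ->
  exists s, [/\ legal K C s, enabled (exec C s) p a & good (fire (exec C s) p a)].
Proof.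
move=> [rC bC] pK en; pose D s := fire (exec C s) p a.
have rD s : legal K C s -> enabled (exec C s) p a -> reachable (D s).
  by move=> l ens; rewrite /D -[fire _ p a]/(exec _ [:: (p, a)]) -exec_cat;
     apply: reachable_exec rC _; apply/legal_cat; split=> //; split.
case: (pselect (exists s, [/\ legal K C s, enabled (exec C s) p a & bivalent (D s)]))
  => [[s [l ens b]]|nobiv]; first by exists s; split=> //; split=> //; apply: rD.
exfalso; have univalent s d : legal K C s -> (p, a) \notin s -> valent (D s) d ->
    ~ valent (D s) (~~ d).
  by move=> l npas v v'; apply: nobiv; exists s; rewrite (enabled_exec en l npas);
     split=> //; apply: bivalentI v v'.
have [d0 v0] := reachable_valent (rD [::] I en).
have [s1 [l1 npas1 v1]] : exists s, [/\ legal K C s, (p, a) \notin s & valent (D s) (~~ d0)].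
  by apply: valent_postpone; rewrite //; case: d0 {v0}; case: bC.
have l_take i : legal K C (take i s1).
  by move: l1; rewrite -{1}(cat_take_drop i s1) => /legal_cat [].
have npas_take i : (p, a) \notin take i s1 by apply: contra npas1; apply: mem_take.
pose P i := valent (D (take i s1)) d0.
have P0 : P 0 by rewrite /P take0.
have nPs1 : ~ P (size s1).
  by rewrite /P take_size; have := univalent _ _ l1 npas1 v1; rewrite negbK.
have [i [lt_i Pi nPi]] := discrete_ivt P0 nPs1.
pose x := nth (p, a) s1 i; pose C0 := exec C (take i s1).
have Etake : take i.+1 s1 = rcons (take i s1) x by rewrite (take_nth (p, a)).
have [_ [enx xK]] : legal K C (take i s1) /\ [/\ enabled C0 x.1 x.2 & x.1 \notin K].
  by apply/legal_rcons; rewrite -Etake.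
have nex : x != (p, a) by apply: contraNneq npas1 => <-; apply: mem_nth.
have [d [vi vi1]] := adjacent_common_valence (reachable_exec rC (l_take i)) pK
  (enabled_exec en (l_take i) (npas_take i)) enx xK nex.
rewrite /P Etake /D exec_rcons -/C0 in nPi.
case: (eqVneq d d0) => [Ed|nd]; first by apply: nPi; rewrite -Ed.
have Ed : d = ~~ d0 by move: nd; case: (d); case: (d0).
by apply: (univalent _ d0 (l_take i) (npas_take i) Pi); rewrite -Ed.
Qed.

Definition input_chain (i : nat) : ivec n := fun p => i <= p.

Lemma input_chain0 : input_chain 0 = fun _ => true.
Proof. by apply: funext. Qed.

Lemma input_chainn : input_chain n = fun _ => false.
Proof. by apply: funext => p; rewrite /input_chain leqNgt ltn_ord. Qed.

Lemma init_input_chainS i (lt_in : i < n) :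
  init_config (input_chain i.+1) =
  set_lst (init_config (input_chain i)) (Ordinal lt_in) (init A (Ordinal lt_in) false).
Proof.
rewrite /init_config /set_lst; congr Config; apply: funext => p /=.
case: eqP => [->|npi]; first by rewrite /input_chain /= ltnn.
congr (init A p _); rewrite /input_chain ltn_neqAle.
by have -> : i != p by apply/eqP => Ei; apply: npi; apply: val_inj.
Qed.

Lemma set_lst_common_valence C j s :
  reachable C -> exists d, valent C d /\ valent (set_lst C j s) d.
Proof.
move=> rC; have [t [q [d [l nqj dec]]]] := crash_one_decides j rC.
have jS : j \in K :|: [set j] by rewrite !inE eqxx orbT.
have [l' E] := exec_set_lst s l jS.
have KS : K \subset K :|: [set j] := subsetUl _ _.
exists d; split; exists t.
- exact: legal_sub KS l.
- by exists q.
- exact: legal_sub KS l'.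
- by exists q; rewrite E /= (negbTE nqj).
Qed.

Lemma valent_init_const b d : valent (init_config (fun _ => b)) d -> d = b.
Proof.
move=> [t l [q dec]]; have [_ _ val] := legal_correct l.
apply: kTAg_prob_const (val _ _ dec).
  by rewrite leqnn andbT (leq_ltn_trans (leq0n f) lt_fn).
by rewrite Faulty_crash_pattern // card_K (ltn_trans lt_kf lt_fn).
Qed.

(* Lemma 2 of Fischer, Lynch and Paterson: along the chain of inputs
   [1...1], [01...1], ..., [0...0], neighbours differ in one process only. *)
Lemma bivalent_initial : exists V, bivalent (init_config V).
Proof.
case: (pselect (exists V, bivalent (init_config V))) => // nobiv; exfalso.
pose P i := valent (init_config (input_chain i)) true.
have P0 : P 0.
  rewrite /P input_chain0; have [d v] := reachable_valent (reachable_init (fun _ => true)).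
  by move: (v); rewrite (valent_init_const v).
have nPn : ~ P n by rewrite /P input_chainn => /valent_init_const.
have [i [lt_in Pi nPi]] := discrete_ivt P0 nPn.
have [d [v v']] := set_lst_common_valence (Ordinal lt_in) (init A (Ordinal lt_in) false)
                     (reachable_init (input_chain i)).
rewrite -init_input_chainS in v'; case: d v v' => v v'; first exact: nPi.
by apply: nobiv; exists (input_chain i); split.
Qed.

Lemma kTAg_oracle_useless_for_Cons : False.
Proof.
have [V bV] := bivalent_initial; have [p0 p0K] := exists_notin_K.
have g0 : good (exec (init_config V) [::]) by split; first exact: reachable_init.
have [sch [en crash live fair [_ goods]]] :=
  @fair_schedule V K K good [::] p0 p0K I g0 bivalent_extension.
have [term irr _ _] := fair_run_correct en crash live fair (subxx K) card_K_le_f.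
have [t [d dec]] := term _ p0K; have [t' le_t [rC bC]] := goods t.
have [s l [q dec']] : valent (cfg_at V sch t') (~~ d) by case: d {dec}; case: bC.
by have := reachable_agree rC l (irr _ _ _ _ le_t dec) dec'; case: d {dec dec'}.
Qed.

End Impossibility.
End Model.

Lemma C_reducible_cC n (T1 T2 : task n) : C_reducible T1 T2 -> cC_reducible T1 T2.
Proof.
case=> A sA; exists A => F nF le_F V R [crash [live [cr [dup [rel [rsp [suit [res _]]]]]]]].
by apply: (sA F nF le_F V R); do 8!(split; first by []).
Qed.

Theorem mainTheorem11 : forall k f n : nat,
  1 <= k <= f - 1 -> f <= n - 1 ->
  ~ cC_reducible (ConsT n f) (kTAg n k f) /\ ~ C_reducible (ConsT n f) (kTAg n k f).
Proof.
move=> k f n /andP [k_gt0 le_kf] le_fn.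
have lt_kf : k < f by lia.
have lt_fn : f < n by lia.
have not_cC : ~ cC_reducible (ConsT n f) (kTAg n k f).
  by case=> A /(kTAg_oracle_useless_for_Cons lt_kf lt_fn).
by split=> // /C_reducible_cC.
Qed.
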